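(* Let $(X,\mathcal{M},\mu)$ be a measure space with $0<\mu(X)<\infty$, and $\Phi$ an $N^*$-function for which there is a constant $k\ge2$ with $\Phi(kx)=2\Phi(x)$ for all $x>0$. Then for every $f\in L^1(X)$, $$\|f\|_\Phi\le\frac{1}{\mu(X)\,\Phi^{-1}\big(\frac{1}{\mu(X)}\big)}\,\|f\|_{L^1}.$$
   Context: An $N^*$-function is a function $\Phi:\mathbb{R}\to\mathbb{R}$ of the form $\Phi(x)=\int_0^{|x|}p(t)\,dt<+\infty$ for all $x$, where $p:[0,\infty)\to[0,\infty]$ is right-continuous, positive on $(0,\infty)$, non-increasing, and satisfies $\lim_{t\to0^+}p(t)=+\infty$ and $\lim_{t\to+\infty}p(t)=0$. $\Phi^{-1}$ is the inverse of $\Phi|_{[0,\infty)}$. $\|f\|_\Phi=\inf\{\lambda>0:\int_X\Phi(|f|/\lambda)\,d\mu\le1\}$. *)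

From HB Require Import structures.
From mathcomp Require Import all_boot all_order all_algebra.
From mathcomp Require Import all_classical all_reals all_analysis.
Set Implicit Arguments. Unset Strict Implicit. Unset Printing Implicit Defensive.
Import Order.TTheory GRing.Theory Num.Theory.
Import numFieldNormedType.Exports.
Local Open Scope classical_set_scope.
Local Open Scope ring_scope.

(* The density p : [0,oo) -> [0,+oo] of an N*-function (values outside
   [0,oo) are irrelevant). *)
Definition Nstar_density {R : realType} (p : R -> \bar R) : Prop :=
  (forall t, 0 <= t -> (0 <= p t)%E) /\
  [/\ 
      (forall t, 0 <= t -> (p x @[x --> t^'+] --> p t)),
      (forall t, 0 < t -> (0 < p t)%E),
      (forall s t, 0 <= s -> s <= t -> (p t <= p s)%E),
      (p x @[x --> 0^'+] --> +oo%E) &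
      (p x @[x --> +oo] --> 0%E)].

Definition Nstar_function {R : realType} (Phi : R -> R) : Prop :=
  exists p : R -> \bar R, Nstar_density p /\
    forall x : R,
      (\int[lebesgue_measure]_(t in `[0%R, `|x|%R]) p t)%E = (Phi x)%:E.

Definition Phi_inv {R : realType} (Phi : R -> R) (v : R) : R :=
  xget 0 [set x | 0 <= x /\ Phi x = v].

(* Luxemburg (Orlicz) norm, valued in \bar R (inf of empty set = +oo) *)
Definition orlicz_norm {d} {T : measurableType d} {R : realType}
  (mu : {measure set T -> \bar R}) (Phi : R -> R) (f : T -> R) : \bar R :=
  ereal_inf [set (l%:E) | l in [set l : R | 0 < l /\
     (\int[mu]_x (Phi (`|f x| / l))%:E <= 1)%E]].

From HB Require Import structures.
From mathcomp Require Import all_boot all_order all_algebra.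
From mathcomp Require Import all_classical all_reals all_analysis.
From mathcomp Require Import measurable_realfun.
From mathcomp Require Import lra ring.
Set Implicit Arguments. Unset Strict Implicit. Unset Printing Implicit Defensive.
Import Order.TTheory GRing.Theory Num.Theory.
Import numFieldNormedType.Exports.
Local Open Scope classical_set_scope.
Local Open Scope ring_scope.

(* Idea: since its density p is non-increasing, Phi is concave on [0, +oo[
   and lies below its tangent line at a := Phi^{-1}(1 / mu(X)):
   Phi y <= Phi a + p a * (y - a).  Integrating at y = |f| / l gives
   int Phi(|f| / l) <= 1 + p a * (||f||_1 / l - mu(X) a), which is <= 1 as
   soon as l >= ||f||_1 / (mu(X) a).  The doubling condition only serves to
   make Phi continuous at 0 and unbounded, so that a exists. *)

Lemma nonincreasing_measurable (R : realType) (p : R -> \bar R) :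
  (forall s t, 0 <= s -> s <= t -> (p t <= p s)%E) ->
  measurable_fun (`[0%R, +oo[ : set (measurableTypeR R)) p.
Proof.
move=> p_ni.
apply: (measurability (ErealGenCInfty.G (R:=R))).
  exact: ErealGenCInfty.measurableE.
move=> _ [_ [r ->] <-].
apply: (@is_interval_measurable R) => s t /= [s0 ps] [t0 pt] u /andP[su ut].
have {}s0 : 0 <= s by move: s0 => /andP[].
have {}pt : (r%:E <= p t)%E by move: pt => /andP[].
split; apply/andP; split => //; first exact: le_trans su.
by apply: le_trans pt _; apply: p_ni => //; apply: le_trans su.
Qed.

Lemma lebesgue_measure_itv_oc (R : realType) (s u : R) : s <= u ->
  lebesgue_measure (`]s, u] : set (measurableTypeR R)) = (u - s)%:E.
Proof.
move=> su; rewrite lebesgue_measure_itv /= lte_fin.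
case: ltP => // us.
have -> : u = s by apply/le_anti; rewrite su us.
by rewrite subrr.
Qed.

Lemma exists_pow2_gt (R : realType) (x : R) : exists n, x < 2 ^+ n.
Proof. by exists (Num.Def.archi_bound x); apply: upper_nthrootP. Qed.

Section NstarFunction.
Variables (R : realType) (p : R -> \bar R) (Phi : R -> R).
Hypothesis hp : Nstar_density p.
Hypothesis hPhi : forall x : R,
  (\int[lebesgue_measure]_(t in `[0%R, `|x|%R]) p t)%E = (Phi x)%:E.

Let density_ge0 t : 0 <= t -> (0 <= p t)%E.
Proof. by case: hp => p_ge0 _; apply: p_ge0. Qed.

Let density_nonincreasing s t : 0 <= s -> s <= t -> (p t <= p s)%E.
Proof. by case: hp => _ [_ _ p_ni _ _]; apply: p_ni. Qed.

Let density_measurable := nonincreasing_measurable density_nonincreasing.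

Let density_measurable_oc s u : 0 <= s ->
  measurable_fun (`]s, u] : set (measurableTypeR R)) p.
Proof.
move=> s0; apply: (measurable_funS _ _ density_measurable) => //.
move=> t /=; rewrite !in_itv /= andbT => /andP[st _].
exact: le_trans (ltW st).
Qed.

Lemma Phi_normr x : Phi `|x| = Phi x.
Proof. by apply/EFin_inj; rewrite -!hPhi normr_id. Qed.

Lemma Phi_ge0 x : 0 <= Phi x.
Proof.
rewrite -lee_fin -hPhi; apply: integral_ge0 => t /=.
by rewrite in_itv /= => /andP[t0 _]; apply: density_ge0.
Qed.

Lemma Phi0 : Phi 0 = 0.
Proof. by apply/EFin_inj; rewrite -hPhi normr0 set_itv1 integral_set1. Qed.

Lemma integral_density_oc s u : 0 <= s -> s <= u ->
  (\int[lebesgue_measure]_(t in `]s, u]) p t)%E = (Phi u - Phi s)%:E.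
Proof.
move=> s0 su.
have Phi_u : (Phi u)%:E =
    ((Phi s)%:E + \int[lebesgue_measure]_(t in `]s, u]) p t)%E.
  rewrite -!hPhi !ger0_norm //; last exact: le_trans su.
  rewrite (@itv_bndbnd_setU _ _ (BLeft 0) (BRight s) (BRight u)) //=.
  rewrite ge0_integral_setU //.
  - apply: (measurable_funS _ _ density_measurable) => //.
    move=> t /=; rewrite !in_itv /= andbT => -[/andP[] //|/andP[st _]].
    exact: le_trans (ltW st).
  - move=> t /=; rewrite !in_itv /= => -[/andP[t0 _]|/andP[st _]].
      exact: density_ge0.
    exact: density_ge0 (le_trans s0 (ltW st)).
  - apply: lt_disjoint => x y; rewrite !in_itv /= => /andP[_ xs] /andP[sy _].
    exact: le_lt_trans sy.
by rewrite EFinB Phi_u addeAC subee // add0e.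
Qed.

Lemma Phi_nondecreasing s u : 0 <= s -> s <= u -> Phi s <= Phi u.
Proof.
move=> s0 su; rewrite -subr_ge0 -lee_fin -integral_density_oc //.
apply: integral_ge0 => t /=; rewrite in_itv /= => /andP[st _].
exact: density_ge0 (le_trans s0 (ltW st)).
Qed.

Lemma Phi_increment_bounds s u : 0 <= s -> s <= u ->
  (p u * (u - s)%:E <= (Phi u - Phi s)%:E)%E /\
  ((Phi u - Phi s)%:E <= p s * (u - s)%:E)%E.
Proof.
move=> s0 su; have p_mble := @density_measurable_oc s u s0.
rewrite -integral_density_oc // -(lebesgue_measure_itv_oc su) -!integral_cst //.
split; apply: ge0_le_integral => // t /= /andP[st tu].
all: have t0 := le_trans s0 (ltW st).
- exact: density_ge0 (le_trans t0 tu).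
- exact: density_nonincreasing.
- exact: density_ge0.
- exact: density_nonincreasing (ltW st).
Qed.

Lemma density_fin_num t : 0 < t -> p t \is a fin_num.
Proof.
move=> t0; have [+ _] := Phi_increment_bounds (lexx 0) (ltW t0).
rewrite Phi0 !subr0; have := density_ge0 (ltW t0).
by case: (p t) => // _; rewrite gt0_mulye ?lte_fin.
Qed.

Lemma fine_density_ge0 t : 0 <= t -> 0 <= fine (p t).
Proof. by move=> t0; apply: fine_ge0; apply: density_ge0. Qed.

Lemma fine_density_gt0 t : 0 < t -> 0 < fine (p t).
Proof.
move=> t0; rewrite -lte_fin fineK ?density_fin_num //.
by case: hp => _ [_ p_gt0 _ _ _]; apply: p_gt0.
Qed.

Lemma fine_density_nonincreasing s t : 0 < s -> s <= t ->
  fine (p t) <= fine (p s).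
Proof.
move=> s0 st; have t0 := lt_le_trans s0 st.
rewrite -lee_fin !fineK ?density_fin_num //.
by apply: density_nonincreasing => //; apply: ltW.
Qed.

Lemma Phi_increment_ge s u : 0 <= s -> s <= u -> 0 < u ->
  fine (p u) * (u - s) <= Phi u - Phi s.
Proof.
move=> s0 su u0; have [+ _] := Phi_increment_bounds s0 su.
by rewrite -lee_fin EFinM fineK ?density_fin_num.
Qed.

Lemma Phi_increment_le s u : 0 < s -> s <= u ->
  Phi u - Phi s <= fine (p s) * (u - s).
Proof.
move=> s0 su; have [_] := Phi_increment_bounds (ltW s0) su.
by rewrite -lee_fin EFinM fineK ?density_fin_num.
Qed.

Lemma Phi_gt0 x : 0 < x -> 0 < Phi x.
Proof.
move=> x0; have := Phi_increment_ge (lexx 0) (ltW x0) x0.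
rewrite Phi0 !subr0; apply: lt_le_trans.
by rewrite mulr_gt0 ?fine_density_gt0.
Qed.

Lemma Phi_below_tangent a y : 0 < a -> 0 <= y ->
  Phi y <= Phi a + fine (p a) * (y - a).
Proof.
move=> a0 y0; have [ya|ay] := leP y a.
  by have := Phi_increment_ge y0 ya a0; lra.
by have := Phi_increment_le a0 (ltW ay); lra.
Qed.

Lemma Phi_lipschitz a r t : 0 < a -> a <= r -> a <= t ->
  `|Phi r - Phi t| <= fine (p a) * `|r - t|.
Proof.
move=> a0.
wlog tr : r t / t <= r.
  move=> wlog_tr ar at_; have [tr|rt] := leP t r; first exact: wlog_tr.
  by rewrite distrC (distrC r); apply: wlog_tr => //; apply: ltW.
move=> ar at_; have t0 := lt_le_trans a0 at_.
rewrite !ger0_norm ?subr_ge0 ?Phi_nondecreasing ?(ltW t0) //.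
apply: le_trans (Phi_increment_le t0 tr) _.
by rewrite ler_wpM2r ?subr_ge0 ?fine_density_nonincreasing.
Qed.

Lemma Phi_continuous_neq0 x : x != 0 -> {for x, continuous Phi}.
Proof.
move=> x_neq0; apply/cvgrPdist_lt => e e0; apply/nbhs_normP.
set r := `|x|; have r0 : 0 < r by rewrite normr_gt0.
have r20 : 0 < r / 2 by rewrite divr_gt0.
set c := fine (p (r / 2)).
have c0 : 0 <= c by apply: fine_density_ge0; apply: ltW.
exists (Num.min (r / 2) (e / (c + 1))).
  by rewrite /= lt_min r20 divr_gt0 // ltr_wpDl.
move=> y /=; rewrite lt_min => /andP[xy_r xy_e].
have ry_le_xy : `|r - `|y| | <= `|x - y| by apply: ler_dist_dist.
have ry : r / 2 <= `|y|.
  have : `|r - `|y| | < r / 2 by apply: le_lt_trans xy_r.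
  by rewrite ltr_norml => /andP[_]; lra.
rewrite -(Phi_normr x) -(Phi_normr y) -/r.
apply: le_lt_trans (Phi_lipschitz r20 _ ry) _; first lra.
apply: (@le_lt_trans _ _ (c * (e / (c + 1)))).
  by apply: ler_wpM2l => //; apply: ltW; apply: le_lt_trans xy_e.
by rewrite mulrA ltr_pdivrMr; [nra | lra].
Qed.

Section Doubling.
Variable k : R.
Hypothesis hk : 2 <= k.
Hypothesis hdelta : forall x : R, 0 < x -> Phi (k * x) = 2 * Phi x.

Let k_gt0 : 0 < k. Proof. exact: lt_le_trans hk. Qed.

Lemma Phi_expn n : Phi (k ^+ n) = 2 ^+ n * Phi 1.
Proof.
elim: n => [|n IH]; first by rewrite !expr0 mul1r.
by rewrite exprS hdelta ?exprn_gt0 // IH exprS mulrA.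
Qed.

Lemma Phi_expVn n : Phi (k^-1 ^+ n) * 2 ^+ n = Phi 1.
Proof.
elim: n => [|n IH]; first by rewrite !expr0 mulr1.
rewrite -IH; have -> : k^-1 ^+ n = k * k^-1 ^+ n.+1.
  by rewrite exprS mulrA mulfV ?mul1r // gt_eqF.
by rewrite hdelta ?exprn_gt0 ?invr_gt0 // (exprS 2 n); ring.
Qed.

Lemma Phi_small e : 0 < e -> exists2 d, 0 < d & Phi d < e.
Proof.
move=> e0; have [n lt_n] := exists_pow2_gt (Phi 1 / e).
exists (k^-1 ^+ n); first by rewrite exprn_gt0 // invr_gt0.
have pow_gt0 : 0 < (2 : R) ^+ n by rewrite exprn_gt0.
by rewrite -(ltr_pM2r pow_gt0) Phi_expVn mulrC -ltr_pdivrMr.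
Qed.

Lemma Phi_unbounded M : exists2 b, 0 <= b & M <= Phi b.
Proof.
have [n lt_n] := exists_pow2_gt (M / Phi 1).
exists (k ^+ n); first by rewrite exprn_ge0 // ltW.
rewrite Phi_expn -ler_pdivrMr ?(Phi_gt0 ltr01) //.
exact: ltW.
Qed.

Lemma Phi_continuous : continuous Phi.
Proof.
move=> x; have [->|x_neq0] := eqVneq x 0; last exact: Phi_continuous_neq0.
apply/cvgrPdist_lt => e e0; apply/nbhs_normP.
have [d d0 Phi_d] := Phi_small e0.
exists d => // y /=; rewrite sub0r normrN => yd.
rewrite Phi0 sub0r normrN -Phi_normr ger0_norm ?Phi_ge0 //.
by apply: le_lt_trans Phi_d; apply: Phi_nondecreasing => //; apply: ltW.
Qed.

Lemma Phi_inv_spec v : 0 < v -> 0 < Phi_inv Phi v /\ Phi (Phi_inv Phi v) = v.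
Proof.
move=> v0.
have ex_sol : exists x, [set x | 0 <= x /\ Phi x = v] x.
  have [b b0 Phi_b] := Phi_unbounded v.
  have [x] : exists2 x, x \in `[0, b] & Phi x = v.
    apply: IVT b0 (continuous_subspaceT Phi_continuous) _.
    rewrite Phi0 (min_idPl (Phi_ge0 b)) (max_idPr (Phi_ge0 b)).
    by rewrite Phi_b ltW.
  by rewrite in_itv /= => /andP[x0 _] Phi_x; exists x.
have [a0 Phi_a] : 0 <= Phi_inv Phi v /\ Phi (Phi_inv Phi v) = v :=
  xgetPex 0 ex_sol.
split=> //; rewrite lt_neqAle a0 andbT; apply: contraTneq v0 => a_eq0.
by move: Phi_a; rewrite -a_eq0 Phi0 => <-; rewrite ltxx.
Qed.

End Doubling.

End NstarFunction.

Lemma orlicz_norm_le d (T : measurableType d) (R : realType)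
    (mu : {measure set T -> \bar R}) (Phi : R -> R) (f : T -> R) (L : R) :
  0 <= L -> (forall l, L < l -> (\int[mu]_x (Phi (`|f x| / l))%:E <= 1)%E) ->
  (orlicz_norm mu Phi f <= L%:E)%E.
Proof.
move=> L0 modular_le1; apply/lee_addgt0Pr => e e0.
rewrite -EFinD; apply: ereal_inf_lbound; exists (L + e) => //.
by split; [lra | apply: modular_le1; lra].
Qed.

Lemma integral_le_affine_bound d (T : measurableType d) (R : realType)
    (mu : {measure set T -> \bar R}) (g : R -> R) (c q : R) (h : T -> R) :
  measurable_fun setT g -> (forall y, 0 <= y -> 0 <= g y) ->
  (forall y, 0 <= y -> g y <= c + q * y) -> 0 <= c -> 0 <= q ->
  measurable_fun setT h -> (forall x, 0 <= h x) ->
  (\int[mu]_x (g (h x))%:E <= c%:E * mu setT + q%:E * \int[mu]_x (h x)%:E)%E.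
Proof.
move=> g_mble g_ge0 g_le c0 q0 h_mble h_ge0.
have qh_mble : measurable_fun setT (fun x => (q * h x)%:E).
  by apply/measurable_EFinP; apply: measurable_funM => //; apply: measurable_cst.
apply: (@le_trans _ _ (\int[mu]_x (c%:E + (q * h x)%:E))%E).
  apply: ge0_le_integral => //.
  - by move=> x _; rewrite lee_fin g_ge0.
  - exact/(measurable_EFinP _ (g \o h))/measurableT_comp.
  - by apply: emeasurable_funD => //; apply: measurable_cst.
  - by move=> x _; rewrite -EFinD lee_fin g_le.
rewrite ge0_integralD //; last by move=> x _; rewrite lee_fin mulr_ge0.
rewrite integral_cst //; under eq_integral do rewrite EFinM.
rewrite ge0_integralZl_EFin //; first by move=> x _; rewrite lee_fin.
exact/measurable_EFinP.
Qed.

Lemma integral_Phi_le1 d (T : measurableType d) (R : realType)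
    (mu : {measure set T -> \bar R}) (p : R -> \bar R) (Phi : R -> R)
    (hp : Nstar_density p)
    (hPhi : forall x : R,
      (\int[lebesgue_measure]_(t in `[0%R, `|x|%R]) p t)%E = (Phi x)%:E)
    (h : T -> R) (m a l : R) :
  measurable_fun setT Phi -> measurable_fun setT h -> (forall x, 0 <= h x) ->
  0 < a -> 0 < l -> mu setT = m%:E -> Phi a * m = 1 ->
  (\int[mu]_x (h x)%:E <= (a * l * m)%:E)%E ->
  (\int[mu]_x (Phi (h x / l))%:E <= 1)%E.
Proof.
move=> Phi_mble h_mble h_ge0 a_gt0 l_gt0 mE Phi_a_m int_h_le.
set q := fine (p a); have q_ge0 : 0 <= q := fine_density_ge0 hp (ltW a_gt0).
have g_mble : measurable_fun setT (fun y : R => Phi (y / l)).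
  apply: measurableT_comp => //.
  by apply: measurable_funM => //; apply: measurable_cst.
have g_le y : 0 <= y -> Phi (y / l) <= (Phi a - q * a) + q / l * y.
  move=> y0; have := Phi_below_tangent hp hPhi a_gt0 (divr_ge0 y0 (ltW l_gt0)).
  by rewrite -/q; lra.
have c_ge0 : 0 <= Phi a - q * a.
  have := Phi_below_tangent hp hPhi a_gt0 (lexx 0).
  by rewrite (Phi0 hPhi) -/q; lra.
have ql_ge0 : 0 <= q / l by rewrite divr_ge0 // ltW.
apply: le_trans (integral_le_affine_bound (g := fun y => Phi (y / l)) mu
  g_mble (fun y _ => Phi_ge0 hp hPhi _) g_le c_ge0 ql_ge0 h_mble h_ge0) _.
have int_h_ge0 : (0 <= \int[mu]_x (h x)%:E)%E.
  by apply: integral_ge0 => x _; rewrite lee_fin.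
have int_hE : (\int[mu]_x (h x)%:E)%E = (fine (\int[mu]_x (h x)%:E))%:E.
  by rewrite fineK // ge0_fin_numE // (le_lt_trans int_h_le) ?ltry.
move: int_h_le; rewrite mE int_hE -!EFinM -EFinD !lee_fin.
set N := fine _ => N_le.
have qN_le : q / l * N <= q * a * m.
  have -> : q * a * m = q / l * (a * l * m) by field; rewrite gt_eqF.
  exact: ler_wpM2l.
lra.
Qed.

Theorem mainTheorem11 (d : measure_display) (T : measurableType d) (R : realType)
  (mu : {measure set T -> \bar R})
  (hmu0 : (0 < mu setT)%E) (hmuoo : (mu setT < +oo)%E)
  (Phi : R -> R) (hPhi : Nstar_function Phi)
  (k : R) (hk : 2 <= k) (hdelta : forall x : R, 0 < x -> Phi (k * x) = 2 * Phi x)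
  (f : T -> R) (hfm : measurable_fun setT f)
  (hfi : mu.-integrable setT (EFin \o f)) :
  (orlicz_norm mu Phi f <=
     ((fine (mu setT) * Phi_inv Phi (fine (mu setT))^-1)^-1)%:E
     * \int[mu]_x (`|f x|)%:E)%E.
Proof.
case: hPhi => p [hp hP]; set m := fine (mu setT).
have mE : mu setT = m%:E by rewrite fineK // ge0_fin_numE // ltW.
have m_gt0 : 0 < m by rewrite -lte_fin -mE.
have [a_gt0 Phi_a] : 0 < Phi_inv Phi m^-1 /\ Phi (Phi_inv Phi m^-1) = m^-1.
  by apply: (Phi_inv_spec hp hP hk hdelta); rewrite invr_gt0.
set a := Phi_inv Phi m^-1 in a_gt0 Phi_a *.
have ma_gt0 : 0 < m * a by rewrite mulr_gt0.
have int_absf_ge0 : (0 <= \int[mu]_x (`|f x|)%:E)%E.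
  by apply: integral_ge0 => x _; rewrite lee_fin.
have int_absfE :
    (\int[mu]_x (`|f x|)%:E)%E = (fine (\int[mu]_x (`|f x|)%:E))%:E.
  rewrite fineK // ge0_fin_numE //.
  by move/integrableP: hfi => [_]; under eq_integral do rewrite /= -abse_EFin.
rewrite int_absfE -EFinM; set N := fine _.
have N_ge0 : 0 <= N by rewrite -lee_fin -int_absfE.
apply: orlicz_norm_le => [|l lt_l]; first by rewrite mulr_ge0 // invr_ge0 ltW.
have l_gt0 : 0 < l by apply: le_lt_trans lt_l; rewrite mulr_ge0 // invr_ge0 ltW.
apply: (integral_Phi_le1 hp hP _ _ _ a_gt0 l_gt0 mE).
- exact: continuous_measurable_fun (Phi_continuous hp hP hk hdelta).
- by apply: measurableT_comp; [exact: normr_measurable | exact: hfm].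
- by move=> x.
- by rewrite Phi_a mulVf ?gt_eqF.
- rewrite int_absfE lee_fin (_ : a * l * m = l * (m * a)); last by ring.
  by move: lt_l; rewrite mulrC ltr_pdivrMr // => /ltW.
Qed.
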